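(* Let $\vec G$ and $\vec H$ be oriented graphs. Then $\vec G$ and $\vec H$ are push-equivalent (i.e. $\vec H$ can be obtained from $\vec G$ by pushing some set of vertices, up to isomorphism) if and only if their anti-twinned graphs $R(\vec G)$ and $R(\vec H)$ are isomorphic as oriented graphs.
   Context: An oriented graph is a directed graph with no loops and no pair of opposite arcs. To push a vertex $v$ of an oriented graph means to reverse the orientation of every arc incident with $v$. Two oriented graphs are push-equivalent if one can be obtained from the other by pushing some set of vertices; this is an equivalence relation, and the equivalence class $[\vec G]$ of $\vec G$ is called a push graph; its elements are called presentations of $[\vec G]$. Given an oriented graph $\vec G$ with vertex set $\{v_1,\dots,v_k\}$, its anti-twinned graph $R(\vec G)$ is the oriented graph with vertex set $\{v_1,\dots,v_k\}\cup\{v_1',\dots,v_k'\}$ (where $v_i'$ are new vertices) and arc set $\{v_iv_j,\ v_i'v_j',\ v_jv_i',\ v_j'v_i : v_iv_j \text{ an arc of } \vec G\}$. (Up to isomorphism $R(\vec G)$ does not depend on which presentation of $[\vec G]$ is used.) An isomorphism of oriented graphs is a bijection $h$ on vertices such that $xy$ is an arc iff $h(x)h(y)$ is an arc. *)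

From mathcomp Require Import all_boot.
Set Implicit Arguments. Unset Strict Implicit. Unset Printing Implicit Defensive.

Definition oriented (V : finType) (a : rel V) : Prop :=
  (forall x, ~~ a x x) /\ (forall x y, ~~ (a x y && a y x)).

Definition push (V : finType) (a : rel V) (S : {set V}) : rel V :=
  fun x y => if (x \in S) (+) (y \in S) then a y x else a x y.

Definition oiso (V W : finType) (a : rel V) (b : rel W) : Prop :=
  exists h : V -> W, bijective h /\ forall x y, a x y = b (h x) (h y).

Definition push_equiv (V W : finType) (a : rel V) (b : rel W) : Prop :=
  exists S : {set V}, oiso (push a S) b.

(* Anti-twinned graph R(G) on V + V; inl v = v, inr v = v'.
   Arcs: v_i v_j, v_i' v_j', v_j v_i', v_j' v_i for each arc v_i v_j. *)
Definition anti_twin (V : finType) (a : rel V) : rel (V + V)%type :=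
  fun x y => match x, y with
  | inl i, inl j => a i j
  | inr i, inr j => a i j
  | inl j, inr i => a i j
  | inr j, inl i => a i j
  end.

From mathcomp Require Import all_boot perm.
Set Implicit Arguments. Unset Strict Implicit. Unset Printing Implicit Defensive.

(* Pushing a vertex v of G amounts to exchanging v and v' in R(G), so
   push-equivalent graphs have isomorphic anti-twinned graphs.  Conversely, in
   R(G) the out-neighbourhood of v' is the mirror image (under x |-> x') of the
   in-neighbourhood of v and vice versa, so an isomorphism f : R(G) -> R(H)
   maps v' to a twin (same in- and out-neighbours) of f(v)'.  Composing f with
   the transposition of these two twins repairs v without breaking any vertex
   u that already satisfies f(u') = f(u)'.  Once every vertex is repaired,
   f restricted to the unprimed vertices, followed by forgetting primes, is an
   isomorphism onto H from G pushed at the set of v such that f(v) is primed. *)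

Definition partner (V : Type) (x : V + V) : V + V :=
  match x with inl v => inr v | inr v => inl v end.

Definition base (V : Type) (x : V + V) : V :=
  match x with inl v | inr v => v end.

Lemma partnerK (V : Type) : involutive (@partner V).
Proof. by case. Qed.

Lemma partner_neq (V : eqType) (x : V + V) : (partner x == x) = false.
Proof. by case: x. Qed.

Lemma base_partner (V : Type) (x : V + V) : base (partner x) = base x.
Proof. by case: x. Qed.

Lemma anti_twin_partnerC (V : finType) (a : rel V) x y :
  anti_twin a x y = anti_twin a (partner y) x.
Proof. by case: x => i; case: y => j. Qed.

Definition flip (V : finType) (S : {set V}) (x : V + V) : V + V :=
  if base x \in S then partner x else x.

Lemma flipK (V : finType) (S : {set V}) : involutive (flip S).
Proof.
move=> x; rewrite /flip; case: (boolP (base x \in S)) => xS.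
  by rewrite base_partner xS partnerK.
by rewrite (negPf xS).
Qed.

Lemma anti_twin_push (V : finType) (a : rel V) (S : {set V}) x y :
  anti_twin (push a S) x y = anti_twin a (flip S x) (flip S y).
Proof.
by case: x => i; case: y => j; rewrite /flip /push /=;
  case: (i \in S); case: (j \in S).
Qed.

Definition is_iso (T U : Type) (c : rel T) (d : rel U) (h : T -> U) : Prop :=
  bijective h /\ forall x y, c x y = d (h x) (h y).

Lemma is_iso_comp (T U X : Type) (c : rel T) (d : rel U) (e : rel X) f g :
  is_iso c d f -> is_iso d e g -> is_iso c e (g \o f).
Proof.
move=> [fB fE] [gB gE]; split; first exact: bij_comp.
by move=> x y; rewrite fE gE.
Qed.

Definition map_sum (V W : Type) (h : V -> W) (x : V + V) : W + W :=
  match x with inl v => inl (h v) | inr v => inr (h v) end.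

Lemma anti_twin_is_iso (V W : finType) (a : rel V) (b : rel W) h :
  is_iso a b h -> is_iso (anti_twin a) (anti_twin b) (map_sum h).
Proof.
move=> [[g hK gK] hE]; split; last by case=> i; case=> j; rewrite /= hE.
by exists (map_sum g); case=> v; rewrite /= ?hK ?gK.
Qed.

Lemma flip_is_iso (V : finType) (a : rel V) (S : {set V}) :
  is_iso (anti_twin (push a S)) (anti_twin a) (flip S).
Proof. by split; [apply: inv_bij; apply: flipK | apply: anti_twin_push]. Qed.

Lemma is_iso_of_anti_twin (V W : finType) (a : rel V) (b : rel W) H h :
  is_iso (anti_twin a) (anti_twin b) H -> (forall v, H (inl v) = inl (h v)) ->
  is_iso a b h.
Proof.
move=> [HB HE] Hh; split=> [|x y]; last first.
  by rewrite -[a x y]/(anti_twin a (inl x) (inl y)) HE !Hh.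
apply: inj_card_bij => [u v huv|].
  by apply: (@inl_inj _ V); apply: (bij_inj HB); rewrite !Hh huv.
by move: (bij_eq_card HB); rewrite !card_sum !addnn => /double_inj ->.
Qed.

Definition twins (T : Type) (c : rel T) (q r : T) : Prop :=
  (forall z, c q z = c r z) /\ (forall z, c z q = c z r).

Lemma twins_tperm (T : finType) (c : rel T) q r :
  twins c q r -> is_iso c c (tperm q r).
Proof.
move=> [out_eq in_eq]; split; first exact/inv_bij/tpermK.
move=> x y; case: tpermP => [->|->|_ _]; case: tpermP => [->|->|_ _];
  by rewrite ?out_eq ?in_eq.
Qed.

Lemma is_iso_twins_partner (V W : finType) (a : rel V) (b : rel W) H v :
  is_iso (anti_twin a) (anti_twin b) H ->
  twins (anti_twin b) (H (inr v)) (partner (H (inl v))).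
Proof.
move=> [[G HK GK] HE]; split=> z; rewrite -(GK z) -HE.
  by rewrite -anti_twin_partnerC -HE [in RHS]anti_twin_partnerC.
by rewrite [in RHS]anti_twin_partnerC partnerK -HE anti_twin_partnerC.
Qed.

Definition mismatched (V W : finType) (H : V + V -> W + W) : {set V} :=
  [set v | H (inr v) != partner (H (inl v))].

Lemma mismatched_tperm (V W : finType) (H : V + V -> W + W) v :
  injective H -> v \in mismatched H ->
  mismatched (tperm (H (inr v)) (partner (H (inl v))) \o H)
    \subset mismatched H :\ v.
Proof.
set q := H (inr v); set r := partner (H (inl v)) => Hinj vbad.
have q_Hlv : q != H (inl v) by apply/eqP => /Hinj.
have r_Hlv : r != H (inl v) by rewrite partner_neq.
apply/subsetP => u; rewrite !inE /comp; apply: contraTT.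
rewrite negb_and !negbK.
case/orP=> [/eqP -> | /eqP matched_u].
  by rewrite -/q tpermL (tpermD q_Hlv r_Hlv).
have neq_uv : u != v.
  by apply: contraTneq vbad => uv; rewrite inE -uv matched_u eqxx.
have q_Hlu : q != H (inl u) by apply/eqP => /Hinj.
have q_Hru : q != H (inr u) by apply: contra neq_uv => /eqP /Hinj [] ->.
have r_Hlu : r != H (inl u).
  by apply/eqP => /(congr1 (@partner _)); rewrite partnerK -matched_u => /Hinj.
have r_Hru : r != H (inr u).
  apply: contra neq_uv; rewrite matched_u => /eqP /(can_inj (@partnerK _)).
  by move/Hinj => [] ->.
by rewrite (tpermD q_Hlu r_Hlu) (tpermD q_Hru r_Hru) matched_u.
Qed.

Lemma exists_matched_anti_twin_iso (V W : finType) (a : rel V) (b : rel W) H :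
  is_iso (anti_twin a) (anti_twin b) H ->
  exists2 H', is_iso (anti_twin a) (anti_twin b) H' &
              forall v, H' (inr v) = partner (H' (inl v)).
Proof.
have [n] := ubnP #|mismatched H|; elim: n H => // n IH H bad_lt Hiso.
have [bad0 | [v vbad]] := set_0Vmem (mismatched H).
  by exists H => // v; move: (in_set0 v); rewrite -bad0 inE => /negbFE /eqP.
set t := tperm (H (inr v)) (partner (H (inl v))).
have t_iso : is_iso (anti_twin a) (anti_twin b) (t \o H).
  exact/(is_iso_comp Hiso)/twins_tperm/(is_iso_twins_partner _ Hiso).
apply: (IH _ _ t_iso); rewrite -ltnS (leq_trans _ bad_lt) // ltnS.
have /subset_leq_card := mismatched_tperm (bij_inj Hiso.1) vbad.
by rewrite [#|mismatched H|](cardsD1 v) vbad add1n ltnS.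
Qed.

Lemma push_equiv_of_matched_iso (V W : finType) (a : rel V) (b : rel W) H :
  is_iso (anti_twin a) (anti_twin b) H ->
  (forall v, H (inr v) = partner (H (inl v))) -> push_equiv a b.
Proof.
move=> Hiso matched.
pose S := [set v | if H (inl v) is inr _ then true else false].
exists S, (fun v => base (H (inl v))).
apply: (is_iso_of_anti_twin (is_iso_comp (flip_is_iso a S) Hiso)) => v /=.
by rewrite /flip inE /=; case E: (H (inl v)) => [w|w]; rewrite /= ?matched E.
Qed.

Theorem theorem1 (V W : finType) (a : rel V) (b : rel W) :
  oriented a -> oriented b ->
  (push_equiv a b <-> oiso (anti_twin a) (anti_twin b)).
Proof.
move=> _ _; split.
- move=> [S [h h_iso]].
  have flip_iso : is_iso (anti_twin a) (anti_twin (push a S)) (flip S).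
    by split; [exact/inv_bij/flipK | move=> x y; rewrite anti_twin_push !flipK].
  by eexists; apply: is_iso_comp flip_iso (anti_twin_is_iso h_iso).
- move=> [H /exists_matched_anti_twin_iso [H' H'_iso matched]].
  exact: push_equiv_of_matched_iso H'_iso matched.
Qed.
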